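(* For every $\beta>1$, \[ \min_{s\ge0}l(s,\beta)=\min_{k\in\mathbb{N}}l(2k,\beta)<l(t,\beta)\qquad\forall\, t\in\bigcup_{k\in\mathbb{N}}(2k,2k+2). \] Moreover: (i) $k_c(\beta)=0$ for every $\beta>\beta^c_0$, and $k_c(\beta)=k+1$ for every $\beta\in(\beta^c_{k+1},\beta^c_k]$, $k\in\mathbb{N}$; (ii) if $\beta>\beta^c_0$, then $0=l(0,\beta)<l(t,\beta)$ for every $t>0$; (iii) if $\beta\in(\beta^c_{k+1},\beta^c_k)$ for some $k\in\mathbb{N}$, then $l(2k+2,\beta)<l(t,\beta)$ for all $t\in[0,+\infty)\setminus\{2k+2\}$; (iv) $l(2k,\beta^c_k)=l(2k+2,\beta^c_k)<l(t,\beta^c_k)$ for every $k\in\mathbb{N}$ and every $t\in[0,+\infty)\setminus\{2k,2k+2\}$; (v) if $\beta\ge\sqrt{3/2}$, then $l(t,\beta)>0$ for $t\in(0,1]$; (vi) for every $\beta>1$, $l(2k_c(\beta),\beta)<l(t,\beta)$ for every $t>2k_c(\beta)$.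
   Context: $\mathbb{N}=\{0,1,2,\dots\}$. For $t\ge 0$ let $q(t)=\lfloor t+1\rfloor/2$ if $\lfloor t\rfloor$ is odd and $q(t)=t-\lfloor t\rfloor/2$ if $\lfloor t\rfloor$ is even, and $p(t)=t+1-q(t)$. For $\beta\ge1$ let $\hat\sigma(t,\beta)\in(0,1)$ be the unique solution $\sigma$ of $\frac{p(t)\sigma}{\sqrt{1-\sigma^2}}+\frac{q(t)\sigma}{\sqrt{\beta^2-\sigma^2}}=1$, and $l(t,\beta)=\frac{p(t)}{\sqrt{1-\hat\sigma^2}}+\frac{\beta^2q(t)}{\sqrt{\beta^2-\hat\sigma^2}}-t-\sqrt2$. For $k\in\mathbb{N}$, $\delta(k,\beta)=l(2k+2,\beta)-l(2k,\beta)$; $k_c(\beta)=\min\{k\in\mathbb{N}:\delta(k,\beta)>0\}$; and $\beta^c_k$ is the unique number in $(1,\sqrt2)$ with $\delta(k,\beta^c_k)=0$ (well defined since $\beta\mapsto\delta(k,\beta)$ is strictly increasing on $[1,\infty)$ with $\delta(k,1)<0<\delta(k,\sqrt2)$). *)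

From Stdlib Require Import Reals Lra ZArith ClassicalEpsilon.
Open Scope R_scope.

(* floor on R: Int_part x = up x - 1 is the floor of x *)
Definition rfloor (t : R) : Z := Int_part t.

Definition q (t : R) : R :=
  if Z.odd (rfloor t) then IZR (rfloor (t + 1)) / 2
  else t - IZR (rfloor t) / 2.

Definition p (t : R) : R := t + 1 - q t.

(* sigma_hat t beta: the (unique, by the paper) sigma in (0,1) solving the equation;
   chosen with Hilbert's epsilon. *)
Definition sigma_hat (t beta : R) : R :=
  epsilon (inhabits 0) (fun s => 0 < s < 1 /\
    p t * s / sqrt (1 - s ^ 2) + q t * s / sqrt (beta ^ 2 - s ^ 2) = 1).

Definition l (t beta : R) : R :=
  let s := sigma_hat t beta in
  p t / sqrt (1 - s ^ 2) + beta ^ 2 * q t / sqrt (beta ^ 2 - s ^ 2) - t - sqrt 2.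

Definition delta (k : nat) (beta : R) : R :=
  l (2 * INR k + 2) beta - l (2 * INR k) beta.

Definition k_c (beta : R) : nat :=
  epsilon (inhabits 0%nat) (fun k => delta k beta > 0 /\
    forall j : nat, (j < k)%nat -> ~ (delta j beta > 0)).

Definition beta_c (k : nat) : R :=
  epsilon (inhabits 1) (fun b => 1 < b < sqrt 2 /\ delta k b = 0).

From Stdlib Require Import Reals Lra Psatz ZArith Arith ClassicalEpsilon Classical Wf_nat.
Open Scope R_scope.

(* For fixed [t] and [beta], [l t beta + t + sqrt 2] is the maximum over [s] in [0, 1] of the
   concave function [phi (p t) (q t) beta s], attained at its stationary point
   [sigma_hat t beta].  As [phi] is affine in [(p, q)] and in [sqrt (beta^2 - s^2)], evaluating
   it at one common [s] compares values of [l] at different [t] or [beta].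

   Along [t] the point [(p t, q t)] climbs a staircase.  While [p] grows, [l] decreases; while
   [q] grows, [l] stays above [min (l (2k)) (l (2k+2))] by the same comparison, except when
   [sigma_hat] crosses [sqrt (beta^2 - 1)], where an explicit polynomial inequality is needed.
   So [l] is minimised on even integers.  The increments [delta k beta = l (2k+2) - l (2k)] grow
   strictly in [k], so [k |-> l (2k)] decreases and then increases with its minimum at [k_c];
   they also grow strictly and continuously in [beta] from [delta k 1 < 0] to
   [delta k (sqrt 2) > 0], which gives the thresholds [beta_c k], decreasing in [k]. *)

Lemma sqrt_le_of_le_sqr x y : 0 <= y -> x <= y * y -> sqrt x <= y.
Proof.
  intros Hy Hx. destruct (Rle_or_lt 0 x) as [H|H].
  - rewrite <- (sqrt_square y Hy). apply sqrt_le_1_alt. lra.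
  - rewrite sqrt_neg_0; lra.
Qed.

Lemma sqrt_lt_of_lt_sqr x y : 0 < y -> x < y * y -> sqrt x < y.
Proof.
  intros Hy Hx. destruct (Rle_or_lt 0 x) as [H|H].
  - rewrite <- (sqrt_square y) by lra. apply sqrt_lt_1_alt. lra.
  - rewrite sqrt_neg_0; lra.
Qed.

Lemma sqrt_one_minus_sqr_lt_1 s : 0 < s < 1 -> sqrt (1 - s ^ 2) < 1.
Proof. intros. apply sqrt_lt_of_lt_sqr; nra. Qed.

Lemma le_sqrt_of_sqr_le x y : 0 <= y -> y * y <= x -> y <= sqrt x.
Proof. intros Hy Hx. rewrite <- (sqrt_square y Hy). apply sqrt_le_1_alt. nra. Qed.

Lemma lt_sqrt_of_sqr_lt x y : 0 <= y -> y * y < x -> y < sqrt x.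
Proof. intros Hy Hx. rewrite <- (sqrt_square y Hy). apply sqrt_lt_1_alt. nra. Qed.

Lemma le_of_sqr_le x y : 0 <= y -> x * x <= y * y -> x <= y.
Proof. intros. nra. Qed.

Lemma lt_of_sqr_lt x y : 0 <= y -> x * x < y * y -> x < y.
Proof. intros. nra. Qed.

(* [(m - x y)^2 - (m - x^2) (m - y^2) = m (x - y)^2]. *)
Lemma sqrt_le_tangent m x y : x ^ 2 < m -> y ^ 2 <= m ->
  sqrt (m - y ^ 2) <= (m - x * y) / sqrt (m - x ^ 2) /\
  (x <> y -> sqrt (m - y ^ 2) < (m - x * y) / sqrt (m - x ^ 2)).
Proof.
  intros Hx Hy.
  assert (HA : 0 < sqrt (m - x ^ 2)) by (apply sqrt_lt_R0; lra).
  assert (HA2 : sqrt (m - x ^ 2) * sqrt (m - x ^ 2) = m - x ^ 2) by (apply sqrt_sqrt; lra).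
  assert (Ha2 : sqrt (m - y ^ 2) * sqrt (m - y ^ 2) = m - y ^ 2) by (apply sqrt_sqrt; lra).
  assert (Ha : 0 <= sqrt (m - y ^ 2)) by apply sqrt_pos.
  set (A := sqrt (m - x ^ 2)) in *; set (a := sqrt (m - y ^ 2)) in *.
  assert (Hm : 0 < m) by nra.
  assert (Hxy : 0 <= m - x * y) by nra.
  assert (Id : (a * A) * (a * A) = (m - x * y) * (m - x * y) - m * ((x - y) * (x - y))).
  { replace ((a * A) * (a * A)) with ((a * a) * (A * A)) by ring. rewrite Ha2, HA2. ring. }
  assert (Hdiv : forall z, z * A <= m - x * y -> z <= (m - x * y) / A).
  { intros z Hz. apply (Rmult_le_reg_r A); [lra|].
    replace ((m - x * y) / A * A) with (m - x * y) by (field; lra). exact Hz. }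
  assert (Hdiv' : forall z, z * A < m - x * y -> z < (m - x * y) / A).
  { intros z Hz. apply (Rmult_lt_reg_r A); [lra|].
    replace ((m - x * y) / A * A) with (m - x * y) by (field; lra). exact Hz. }
  split.
  - apply Hdiv, le_of_sqr_le; [lra|].
    assert (0 <= m * ((x - y) * (x - y))) by (apply Rmult_le_pos; [lra | apply Rle_0_sqr]). lra.
  - intros Hne. apply Hdiv', lt_of_sqr_lt; [lra|].
    assert (0 < (x - y) * (x - y)) by (apply Rsqr_pos_lt; lra).
    assert (0 < m * ((x - y) * (x - y))) by (apply Rmult_lt_0_compat; lra). lra.
Qed.

(** * Maximising [phi] *)

Definition phi (P Q b s : R) : R := P * sqrt (1 - s ^ 2) + Q * sqrt (b ^ 2 - s ^ 2) + s.
Definition lam (P Q b s : R) : R := P / sqrt (1 - s ^ 2) + b ^ 2 * Q / sqrt (b ^ 2 - s ^ 2).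
Definition crit (P Q b s : R) : R := P * s / sqrt (1 - s ^ 2) + Q * s / sqrt (b ^ 2 - s ^ 2).

(* [crit P Q b s = 1] is the stationarity equation [d phi / d s = 1 - crit P Q b s = 0]
   of the concave function [phi P Q b], and [lam P Q b s] is then its maximum value. *)
Lemma lam_tangent_identity P Q b s sg : 1 <= b -> 0 < s < 1 ->
  P * ((1 - s * sg) / sqrt (1 - s ^ 2)) + Q * ((b ^ 2 - s * sg) / sqrt (b ^ 2 - s ^ 2)) + sg
  = lam P Q b s + sg * (1 - crit P Q b s).
Proof.
  intros Hb Hs. unfold lam, crit.
  assert (0 < sqrt (1 - s ^ 2)) by (apply sqrt_lt_R0; nra).
  assert (0 < sqrt (b ^ 2 - s ^ 2)) by (apply sqrt_lt_R0; nra).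
  field. lra.
Qed.

Lemma phi_le_lam P Q b s sg :
  0 <= P -> 0 <= Q -> 1 <= b -> 0 < s < 1 -> 0 <= sg <= 1 -> crit P Q b s = 1 ->
  phi P Q b sg <= lam P Q b s /\ (0 < P -> sg <> s -> phi P Q b sg < lam P Q b s).
Proof.
  intros HP HQ Hb Hs Hsg Hc.
  assert (Hl := lam_tangent_identity P Q b s sg Hb Hs). rewrite Hc in Hl.
  destruct (sqrt_le_tangent 1 s sg) as [T1 T1s]; [nra|nra|].
  destruct (sqrt_le_tangent (b ^ 2) s sg) as [T2 _]; [nra|nra|].
  assert (Q * sqrt (b ^ 2 - sg ^ 2) <= Q * ((b ^ 2 - s * sg) / sqrt (b ^ 2 - s ^ 2)))
    by (apply Rmult_le_compat_l; lra).
  unfold phi. split.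
  - assert (P * sqrt (1 - sg ^ 2) <= P * ((1 - s * sg) / sqrt (1 - s ^ 2)))
      by (apply Rmult_le_compat_l; lra). lra.
  - intros HP' Hne.
    assert (P * sqrt (1 - sg ^ 2) < P * ((1 - s * sg) / sqrt (1 - s ^ 2)))
      by (apply Rmult_lt_compat_l; [lra|apply T1s; auto]). lra.
Qed.

Lemma phi_eq_lam P Q b s : 1 <= b -> 0 < s < 1 -> crit P Q b s = 1 -> phi P Q b s = lam P Q b s.
Proof.
  intros Hb Hs Hc.
  assert (Hl := lam_tangent_identity P Q b s s Hb Hs). rewrite Hc in Hl.
  assert (E : forall m, s ^ 2 < m -> (m - s * s) / sqrt (m - s ^ 2) = sqrt (m - s ^ 2)).
  { intros m Hm. assert (0 < sqrt (m - s ^ 2)) by (apply sqrt_lt_R0; lra).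
    apply (Rmult_eq_reg_r (sqrt (m - s ^ 2))); [|lra].
    rewrite sqrt_sqrt by lra. field. lra. }
  unfold phi. rewrite !E in Hl by nra. lra.
Qed.

Lemma crit_continuous P Q b a : 1 <= b -> 0 <= a < 1 -> continuity_pt (crit P Q b) a.
Proof.
  intros Hb Ha. unfold crit.
  assert (D : forall m, a ^ 2 < m ->
              continuity_pt (fun s => sqrt (m - s ^ 2)) a /\ sqrt (m - a ^ 2) <> 0).
  { intros m Hm. split.
    - apply (continuity_pt_comp (fun s => m - s ^ 2) sqrt); [reg|]. apply continuity_pt_sqrt. lra.
    - apply Rgt_not_eq, sqrt_lt_R0. lra. }
  destruct (D 1) as [D1 N1]; [nra|]. destruct (D (b ^ 2)) as [D2 N2]; [nra|].
  apply continuity_pt_plus; apply continuity_pt_div; auto; reg.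
Qed.

Lemma crit_root_exists P Q b : 1 <= P -> 0 <= Q -> 1 <= b ->
  exists s, 0 < s < 1 /\ crit P Q b s = 1.
Proof.
  intros HP HQ Hb.
  assert (H0 : crit P Q b 0 - 1 < 0) by (unfold crit, Rdiv; rewrite !Rmult_0_r, !Rmult_0_l; lra).
  assert (H1 : 0 < crit P Q b (4 / 5) - 1).
  { unfold crit.
    replace (1 - (4 / 5) ^ 2) with ((3 / 5) * (3 / 5)) by field. rewrite sqrt_square by lra.
    assert (0 < sqrt (b ^ 2 - (4 / 5) ^ 2)) by (apply sqrt_lt_R0; nra).
    assert (0 <= Q * (4 / 5) / sqrt (b ^ 2 - (4 / 5) ^ 2))
      by (apply Rmult_le_pos; [nra | left; apply Rinv_0_lt_compat; lra]).
    assert (P * (4 / 5) / (3 / 5) = 4 / 3 * P) by field. lra. }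
  destruct (Ranalysis5.IVT_interv (fun s => crit P Q b s - 1) 0 (4 / 5)) as [z [Hz Hfz]]; try lra.
  - intros a Ha. apply continuity_pt_minus; [apply crit_continuous; lra|].
    apply continuity_pt_const. now intros ??.
  - exists z. assert (z <> 0) by (intros ->; lra). lra.
Qed.

Lemma div_sqrt_lt b x y : 1 <= b -> 0 <= x < y -> y < 1 ->
  x / sqrt (b ^ 2 - x ^ 2) < y / sqrt (b ^ 2 - y ^ 2).
Proof.
  intros Hb Hxy Hy.
  assert (H2 : 0 < sqrt (b ^ 2 - y ^ 2)) by (apply sqrt_lt_R0; nra).
  assert (H12 : sqrt (b ^ 2 - y ^ 2) <= sqrt (b ^ 2 - x ^ 2)) by (apply sqrt_le_1_alt; nra).
  apply (Rle_lt_trans _ (x / sqrt (b ^ 2 - y ^ 2))).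
  - apply Rmult_le_compat_l; [lra|]. apply Rinv_le_contravar; lra.
  - apply Rmult_lt_compat_r; [apply Rinv_0_lt_compat|]; lra.
Qed.

Lemma crit_lt P Q b x y : 0 < P -> 0 <= Q -> 1 <= b -> 0 <= x < y -> y < 1 ->
  crit P Q b x < crit P Q b y.
Proof.
  intros HP HQ Hb Hxy Hy. unfold crit.
  pose proof (div_sqrt_lt 1 x y ltac:(lra) Hxy Hy) as R1.
  pose proof (div_sqrt_lt b x y Hb Hxy Hy) as R2.
  rewrite pow1 in R1. unfold Rdiv in *. rewrite !Rmult_assoc. nra.
Qed.

Lemma mul_le_sqrt_of_crit_eq_1 P Q b s : 0 <= Q -> 1 <= b -> 0 < s < 1 -> crit P Q b s = 1 ->
  P * s <= sqrt (1 - s ^ 2).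
Proof.
  intros HQ Hb Hs Hc. unfold crit in Hc.
  assert (HA : 0 < sqrt (1 - s ^ 2)) by (apply sqrt_lt_R0; nra).
  assert (HB : 0 < sqrt (b ^ 2 - s ^ 2)) by (apply sqrt_lt_R0; nra).
  assert (0 <= Q * s / sqrt (b ^ 2 - s ^ 2))
    by (apply Rmult_le_pos; [nra | left; apply Rinv_0_lt_compat; lra]).
  apply (Rmult_le_reg_r (/ sqrt (1 - s ^ 2))); [apply Rinv_0_lt_compat; lra|].
  rewrite Rinv_r by lra. unfold Rdiv in Hc. lra.
Qed.

Lemma crit_lt_inv P Q b x y : 0 < P -> 0 <= Q -> 1 <= b -> 0 <= x < 1 -> 0 <= y < 1 ->
  crit P Q b x < crit P Q b y -> x < y.
Proof.
  intros HP HQ Hb Hx Hy H. destruct (Rlt_or_le x y) as [h|h]; [exact h|].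
  destruct (Req_dec y x) as [->|Hne]; [lra|].
  assert (crit P Q b y < crit P Q b x) by (apply crit_lt; lra). lra.
Qed.

(** * The staircase [(p t, q t)] and [l] as a maximum *)

Lemma rfloor_eq (t : R) (z : Z) : IZR z <= t < IZR z + 1 -> rfloor t = z.
Proof. intros H. unfold rfloor. symmetry. apply Int_part_spec. lra. Qed.

Lemma Zodd_double (z : Z) : Z.odd (2 * z) = false.
Proof. now rewrite Z.odd_mul. Qed.

Lemma Zodd_double_succ (z : Z) : Z.odd (2 * z + 1) = true.
Proof. rewrite Z.odd_add, Z.odd_mul. now destruct (Z.odd z). Qed.

Lemma pq_q_rising (k : nat) (t : R) : 2 * INR k <= t <= 2 * INR k + 1 ->
  p t = INR k + 1 /\ q t = t - INR k.
Proof.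
  intros H. rewrite INR_IZR_INZ in *. set (z := Z.of_nat k) in *.
  assert (Hq : q t = t - IZR z).
  { unfold q. destruct (Rlt_or_le t (2 * IZR z + 1)) as [h|h].
    - rewrite (rfloor_eq t (2 * z)) by (rewrite mult_IZR; simpl; lra).
      rewrite Zodd_double, mult_IZR. simpl. field.
    - rewrite (rfloor_eq t (2 * z + 1)) by (rewrite plus_IZR, mult_IZR; simpl; lra).
      rewrite Zodd_double_succ.
      rewrite (rfloor_eq (t + 1) (2 * z + 2)) by (rewrite plus_IZR, mult_IZR; simpl; lra).
      rewrite plus_IZR, mult_IZR. simpl. lra. }
  split; [unfold p; rewrite Hq; ring | exact Hq].
Qed.

Lemma pq_p_rising (k : nat) (t : R) : 2 * INR k + 1 <= t <= 2 * INR k + 2 ->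
  p t = t - INR k /\ q t = INR k + 1.
Proof.
  intros H. rewrite INR_IZR_INZ in *. set (z := Z.of_nat k) in *.
  assert (Hq : q t = IZR z + 1).
  { unfold q. destruct (Rlt_or_le t (2 * IZR z + 2)) as [h|h].
    - rewrite (rfloor_eq t (2 * z + 1)) by (rewrite plus_IZR, mult_IZR; simpl; lra).
      rewrite Zodd_double_succ.
      rewrite (rfloor_eq (t + 1) (2 * z + 2)) by (rewrite plus_IZR, mult_IZR; simpl; lra).
      rewrite plus_IZR, mult_IZR. simpl. lra.
    - rewrite (rfloor_eq t (2 * (z + 1))) by (rewrite mult_IZR, plus_IZR; simpl; lra).
      rewrite Zodd_double, mult_IZR, plus_IZR. simpl. lra. }
  split; [unfold p; rewrite Hq; ring | exact Hq].
Qed.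

Lemma pq_even (k : nat) : p (2 * INR k) = INR k + 1 /\ q (2 * INR k) = INR k.
Proof. destruct (pq_q_rising k (2 * INR k)) as [Hp Hq]; [lra|]. split; lra. Qed.

Lemma pq_even_succ (k : nat) : p (2 * INR k + 2) = INR k + 2 /\ q (2 * INR k + 2) = INR k + 1.
Proof. destruct (pq_p_rising k (2 * INR k + 2)) as [Hp Hq]; [lra|]. split; lra. Qed.

Lemma INR_double_succ (k : nat) : 2 * INR (S k) = 2 * INR k + 2.
Proof. rewrite S_INR. ring. Qed.

Lemma even_segment_exists t : 0 <= t -> exists k : nat, 2 * INR k <= t < 2 * INR k + 2.
Proof.
  intros Ht. assert (Hb := base_Int_part (t / 2)).
  assert (Hz : (0 <= Int_part (t / 2))%Z)
    by (assert (-1 < Int_part (t / 2))%Z by (apply lt_IZR; lra); lia).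
  exists (Z.to_nat (Int_part (t / 2))). rewrite INR_IZR_INZ, Z2Nat.id by exact Hz. lra.
Qed.

Lemma pq_bounds t : 0 <= t -> 1 <= p t /\ 0 <= q t.
Proof.
  intros Ht. destruct (even_segment_exists t Ht) as [k Hk]. assert (0 <= INR k) by apply pos_INR.
  destruct (Rle_or_lt t (2 * INR k + 1)).
  - destruct (pq_q_rising k t); lra.
  - destruct (pq_p_rising k t); lra.
Qed.

Definition l_at (t b s : R) : R := phi (p t) (q t) b s - t - sqrt 2.

Section LAsMaximum.
Variables t b : R.
Hypothesis (Ht : 0 <= t) (Hb : 1 <= b).

Lemma sigma_hat_spec : 0 < sigma_hat t b < 1 /\ crit (p t) (q t) b (sigma_hat t b) = 1.
Proof.
  destruct (pq_bounds t Ht) as [HP HQ].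
  unfold sigma_hat.
  apply (epsilon_spec (inhabits 0) (fun s => 0 < s < 1 /\ crit (p t) (q t) b s = 1)).
  exact (crit_root_exists (p t) (q t) b HP HQ Hb).
Qed.

Lemma l_eq_l_at : l t b = l_at t b (sigma_hat t b).
Proof.
  destruct sigma_hat_spec as [Hs Hc].
  unfold l_at. rewrite (phi_eq_lam _ _ _ _ Hb Hs Hc). reflexivity.
Qed.

Lemma l_at_le_l s : 0 <= s <= 1 -> l_at t b s <= l t b.
Proof.
  intros Hs. destruct (pq_bounds t Ht) as [HP HQ]. destruct sigma_hat_spec as [Hs0 Hc0].
  rewrite l_eq_l_at. unfold l_at. rewrite (phi_eq_lam _ _ _ _ Hb Hs0 Hc0).
  assert (H := proj1 (phi_le_lam (p t) (q t) b (sigma_hat t b) s ltac:(lra) HQ Hb Hs0 Hs Hc0)). lra.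
Qed.

Lemma l_at_lt_l s : 0 <= s <= 1 -> crit (p t) (q t) b s <> 1 -> l_at t b s < l t b.
Proof.
  intros Hs Hc. destruct (pq_bounds t Ht) as [HP HQ]. destruct sigma_hat_spec as [Hs0 Hc0].
  assert (Hne : s <> sigma_hat t b) by (intros ->; contradiction).
  rewrite l_eq_l_at. unfold l_at. rewrite (phi_eq_lam _ _ _ _ Hb Hs0 Hc0).
  assert (H := proj2 (phi_le_lam (p t) (q t) b (sigma_hat t b) s ltac:(lra) HQ Hb Hs0 Hs Hc0)).
  specialize (H ltac:(lra) Hne). lra.
Qed.

End LAsMaximum.

Lemma l_at_q_rising (k : nat) t t' b s :
  2 * INR k <= t <= 2 * INR k + 1 -> 2 * INR k <= t' <= 2 * INR k + 1 ->
  l_at t b s = l_at t' b s + (t - t') * (sqrt (b ^ 2 - s ^ 2) - 1).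
Proof.
  intros H H'. destruct (pq_q_rising k t H) as [P Q]. destruct (pq_q_rising k t' H') as [P' Q'].
  unfold l_at, phi. rewrite P, Q, P', Q'. ring.
Qed.

Lemma l_at_p_rising (k : nat) t t' b s :
  2 * INR k + 1 <= t <= 2 * INR k + 2 -> 2 * INR k + 1 <= t' <= 2 * INR k + 2 ->
  l_at t b s = l_at t' b s + (t - t') * (sqrt (1 - s ^ 2) - 1).
Proof.
  intros H H'. destruct (pq_p_rising k t H) as [P Q]. destruct (pq_p_rising k t' H') as [P' Q'].
  unfold l_at, phi. rewrite P, Q, P', Q'. ring.
Qed.

Definition rise (b s : R) : R := sqrt (1 - s ^ 2) + sqrt (b ^ 2 - s ^ 2) - 2.

Lemma l_at_even_succ (k : nat) b s : l_at (2 * INR k + 2) b s = l_at (2 * INR k) b s + rise b s.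
Proof.
  destruct (pq_even k) as [P Q]. destruct (pq_even_succ k) as [P' Q'].
  unfold l_at, phi, rise. rewrite P, Q, P', Q'. ring.
Qed.

(** * A polynomial inequality for the crossing case *)

Section MidPolynomial.
Variable e : R.

(* [e^2 (g0 + b g1 + c g2 + c b g3)] is [W^2 - U^2 - V^2] in [mid_sum_squares], reduced
   by [b^2 = 1 + e^2] and [c^2 = 1 - e^2]. *)
Definition g0 := -2 + 2 * e - 6 * e ^ 2 + 6 * e ^ 3 + 9 * e ^ 4 - 2 * e ^ 5 - e ^ 6.
Definition g1 := 6 * e - 6 * e ^ 2 - 4 * e ^ 3 + 6 * e ^ 4 + 2 * e ^ 5.
Definition g2 := 2 * e - 10 * e ^ 2 + 4 * e ^ 3 + 2 * e ^ 4 - 2 * e ^ 5.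
Definition g3 := 2 + 6 * e - 10 * e ^ 2 - 4 * e ^ 3 + 2 * e ^ 4.

(* Truncated Taylor bounds for [sqrt (1 - e^2)] and [sqrt (1 + e^2)]. *)
Definition c_lo := 1 - e ^ 2 / 2 - e ^ 4 / 2.
Definition c_hi := 1 - e ^ 2 / 2.
Definition b_lo := 1 + e ^ 2 / 2 - e ^ 4 / 8.

Hypothesis He : 0 <= e <= 1.

Lemma bernstein_basis_nonneg i j : 0 <= e ^ i * (1 - e) ^ j.
Proof. apply Rmult_le_pos; apply pow_le; lra. Qed.

(* The four certificates below write a polynomial in the Bernstein basis of [0, 1]
   with nonnegative coefficients. *)
Ltac bernstein :=
  repeat first [ apply Rplus_le_le_0_compat
               | apply Rmult_le_pos; [lra | apply bernstein_basis_nonneg] ].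

Lemma g13_lo_nonneg : 0 <= g1 + c_lo * g3.
Proof.
  replace (g1 + c_lo * g3) with
    (2 * (e ^ 0 * (1 - e) ^ 8) + 28 * (e ^ 1 * (1 - e) ^ 7) + 123 * (e ^ 2 * (1 - e) ^ 6)
     + 251 * (e ^ 3 * (1 - e) ^ 5) + 262 * (e ^ 4 * (1 - e) ^ 4) + 131 * (e ^ 5 * (1 - e) ^ 3)
     + 22 * (e ^ 6 * (1 - e) ^ 2) + 4 * (e ^ 7 * (1 - e) ^ 1) + 4 * (e ^ 8 * (1 - e) ^ 0))
    by (unfold g1, g3, c_lo; field).
  bernstein.
Qed.

Lemma g13_hi_nonneg : 0 <= g1 + c_hi * g3.
Proof.
  replace (g1 + c_hi * g3) with
    (2 * (e ^ 0 * (1 - e) ^ 6) + 24 * (e ^ 1 * (1 - e) ^ 5) + 73 * (e ^ 2 * (1 - e) ^ 4)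
     + 81 * (e ^ 3 * (1 - e) ^ 3) + 28 * (e ^ 4 * (1 - e) ^ 2) + 1 * (e ^ 5 * (1 - e) ^ 1)
     + 2 * (e ^ 6 * (1 - e) ^ 0))
    by (unfold g1, g3, c_hi; field).
  bernstein.
Qed.

Lemma g_lo_nonneg : 0 <= g0 + b_lo * g1 + c_lo * (g2 + b_lo * g3).
Proof.
  replace (g0 + b_lo * g1 + c_lo * (g2 + b_lo * g3)) with
    (16 * (e ^ 1 * (1 - e) ^ 11) + 144 * (e ^ 2 * (1 - e) ^ 10) + 564 * (e ^ 3 * (1 - e) ^ 9)
     + 5021 / 4 * (e ^ 4 * (1 - e) ^ 8) + 1725 * (e ^ 5 * (1 - e) ^ 7)
     + 11769 / 8 * (e ^ 6 * (1 - e) ^ 6) + 5845 / 8 * (e ^ 7 * (1 - e) ^ 5)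
     + 785 / 4 * (e ^ 8 * (1 - e) ^ 4) + 689 / 8 * (e ^ 9 * (1 - e) ^ 3)
     + 405 / 4 * (e ^ 10 * (1 - e) ^ 2) + 115 / 2 * (e ^ 11 * (1 - e) ^ 1)
     + 23 / 2 * (e ^ 12 * (1 - e) ^ 0))
    by (unfold g0, g1, g2, g3, b_lo, c_lo; field).
  bernstein.
Qed.

Lemma g_hi_nonneg : 0 <= g0 + b_lo * g1 + c_hi * (g2 + b_lo * g3).
Proof.
  replace (g0 + b_lo * g1 + c_hi * (g2 + b_lo * g3)) with
    (16 * (e ^ 1 * (1 - e) ^ 9) + 112 * (e ^ 2 * (1 - e) ^ 8) + 324 * (e ^ 3 * (1 - e) ^ 7)
     + 1985 / 4 * (e ^ 4 * (1 - e) ^ 6) + 841 / 2 * (e ^ 5 * (1 - e) ^ 5)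
     + 1443 / 8 * (e ^ 6 * (1 - e) ^ 4) + 271 / 8 * (e ^ 7 * (1 - e) ^ 3)
     + 45 / 2 * (e ^ 8 * (1 - e) ^ 2) + 187 / 8 * (e ^ 9 * (1 - e) ^ 1)
     + 27 / 4 * (e ^ 10 * (1 - e) ^ 0))
    by (unfold g0, g1, g2, g3, b_lo, c_hi; field).
  bernstein.
Qed.

End MidPolynomial.

Lemma affine_nonneg_between lo hi c a m : lo <= c <= hi ->
  0 <= a + lo * m -> 0 <= a + hi * m -> 0 <= a + c * m.
Proof.
  intros Hc Hlo Hhi. destruct (Rle_or_lt 0 m).
  - assert (0 <= (c - lo) * m) by (apply Rmult_le_pos; lra). lra.
  - assert (0 <= (hi - c) * - m) by (apply Rmult_le_pos; lra). lra.
Qed.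

Section TaylorBounds.
Variables e b c : R.
Hypotheses (He : 0 < e < 1) (Hc : 0 < c) (Hc2 : c * c = 1 - e * e)
           (Hb : 0 < b) (Hb2 : b * b = 1 + e * e).

Lemma c_bounds : c_lo e <= c <= c_hi e.
Proof.
  unfold c_lo, c_hi.
  assert (0 <= e ^ 4 * (3 / 4 - e ^ 2 / 2 - e ^ 4 / 4))
    by (apply Rmult_le_pos; [apply pow_le|]; nra).
  split.
  - destruct (Rle_or_lt (1 - e ^ 2 / 2 - e ^ 4 / 2) 0); [lra|]. apply le_of_sqr_le; nra.
  - apply le_of_sqr_le; nra.
Qed.

Lemma b_lower_bound : b_lo e <= b.
Proof.
  unfold b_lo.
  assert (0 <= e ^ 6 * (1 / 8 - e ^ 2 / 64)) by (apply Rmult_le_pos; [apply pow_le|]; nra).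
  apply le_of_sqr_le; nra.
Qed.

Lemma g_nonneg : 0 <= g0 e + b * g1 e + c * g2 e + c * b * g3 e.
Proof.
  assert (Hcb := c_bounds). assert (Hbl := b_lower_bound).
  assert (H13 : 0 <= g1 e + c * g3 e)
    by (apply (affine_nonneg_between (c_lo e) (c_hi e));
        [lra | apply g13_lo_nonneg | apply g13_hi_nonneg]; lra).
  assert (H : 0 <= g0 e + b_lo e * g1 e + c * (g2 e + b_lo e * g3 e)).
  { replace (g0 e + b_lo e * g1 e + c * (g2 e + b_lo e * g3 e))
      with ((g0 e + b_lo e * g1 e) + c * (g2 e + b_lo e * g3 e)) by ring.
    apply (affine_nonneg_between (c_lo e) (c_hi e)); [lra| |];
      [apply g_lo_nonneg | apply g_hi_nonneg]; lra. }
  assert (0 <= (b - b_lo e) * (g1 e + c * g3 e)) by (apply Rmult_le_pos; lra).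
  nra.
Qed.

End TaylorBounds.

Lemma cauchy_schwarz_unit U V A s : A * A + s * s = 1 ->
  (U * A + V * s) * (U * A + V * s) <= U * U + V * V.
Proof.
  intros H. assert (0 <= (U * s - V * A) * (U * s - V * A)) by apply Rle_0_sqr.
  replace (U * U + V * V) with ((U * U + V * V) * (A * A + s * s)) by (rewrite H; ring). nra.
Qed.

(* Here [b = sqrt (1 + e^2)], [c = sqrt (1 - e^2)], [A = sqrt (1 - s^2)], [B = sqrt (b^2 - s^2)]. *)
Section MidInequality.
Variables s e A B c b : R.
Hypotheses (Hs : 0 < s) (Hse : s < e) (He1 : e < 1)
  (HA : 0 < A) (HA2 : A * A = 1 - s * s) (HB2 : B * B = b * b - s * s)
  (Hc : 0 < c) (Hc2 : c * c = 1 - e * e) (Hb : 0 < b) (Hb2 : b * b = 1 + e * e).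

Lemma mid_chord_bound : (1 + b) * B <= (1 + b) + (1 + c) * (A - c).
Proof.
  assert (HAc : c <= A) by (apply le_of_sqr_le; nra).
  assert (0 <= ((1 + b) * (1 + b) - (1 + c) * (1 + c)) * (A - c) * (1 - A))
    by (apply Rmult_le_pos; [apply Rmult_le_pos|]; nra).
  apply le_of_sqr_le; [nra|].
  assert (Id : ((1 + b) + (1 + c) * (A - c)) * ((1 + b) + (1 + c) * (A - c))
               - (1 + b) * (1 + b) * (B * B)
               - ((1 + b) * (1 + b) - (1 + c) * (1 + c)) * (A - c) * (1 - A)
     = (B * B - (b * b - s * s)) * (- (1 + b) * (1 + b))
       + (s * s - (1 - A * A)) * ((1 + b) * (1 + b))
       + (b * b - (1 + e * e)) * (- A - 2 * b - b ^ 2 + c - c * A - e ^ 2)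
       + (c * c - (1 - e * e)) * (- 2 - A - 2 * b + c - c * A + c ^ 2 - e ^ 2)) by ring.
  replace (B * B - (b * b - s * s)) with 0 in Id by lra.
  replace (s * s - (1 - A * A)) with 0 in Id by lra.
  replace (b * b - (1 + e * e)) with 0 in Id by lra.
  replace (c * c - (1 - e * e)) with 0 in Id by lra.
  nra.
Qed.

Let U := e * (1 + c) * (1 + b) + c * (1 + e) * (2 + b + c).
Let V := e * (1 + c) * (1 + b).
Let W := e * (1 + c) * (1 + b) * (1 + e) + c * c * (1 + e) * (2 + b + c).

Lemma mid_sum_squares : U * U + V * V <= W * W.
Proof.
  assert (Id : W * W - (U * U + V * V) - e * e * (g0 e + b * g1 e + c * g2 e + c * b * g3 e)
    = (b * b - (1 + e * e)) * (- c ^ 2 + c ^ 4 - 2 * e * c - 2 * e * c ^ 2 + 2 * e * c ^ 3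
        + 2 * e * c ^ 4
        - e ^ 2 - 4 * e ^ 2 * c + 4 * e ^ 2 * c ^ 3 + e ^ 2 * c ^ 4 + 2 * e ^ 3 + 4 * e ^ 3 * c
        + 4 * e ^ 3 * c ^ 2 + 2 * e ^ 3 * c ^ 3 + e ^ 4 + 2 * e ^ 4 * c + e ^ 4 * c ^ 2)
      + (c * c - (1 - e * e)) * (5 * c ^ 2 + 4 * c ^ 2 * b + 4 * c ^ 3 + 2 * c ^ 3 * b + c ^ 4
        + 6 * e * c + 6 * e * c * b + 12 * e * c ^ 2 + 10 * e * c ^ 2 * b + 8 * e * c ^ 3
        + 4 * e * c ^ 3 * b + 2 * e * c ^ 4 + 2 * e ^ 2 * b + 10 * e ^ 2 * c + 12 * e ^ 2 * c * b
        + 9 * e ^ 2 * c ^ 2 + 8 * e ^ 2 * c ^ 2 * b + 4 * e ^ 2 * c ^ 3 + 2 * e ^ 2 * c ^ 3 * b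
        + e ^ 2 * c ^ 4 - 2 * e ^ 3 + 2 * e ^ 3 * b + 2 * e ^ 3 * c + 4 * e ^ 3 * c * b
        + 2 * e ^ 3 * c ^ 2 + 2 * e ^ 3 * c ^ 2 * b - 7 * e ^ 4 - 6 * e ^ 4 * b - 2 * e ^ 4 * c * b
        + 2 * e ^ 5 - 2 * e ^ 5 * b + 2 * e ^ 5 * c + e ^ 6))
    by (unfold U, V, W, g0, g1, g2, g3; ring).
  replace (b * b - (1 + e * e)) with 0 in Id by lra.
  replace (c * c - (1 - e * e)) with 0 in Id by lra.
  assert (0 <= e * e * (g0 e + b * g1 e + c * g2 e + c * b * g3 e))
    by (apply Rmult_le_pos; [nra | apply g_nonneg; lra]).
  lra.
Qed.

Lemma mid_ineq : c * (1 + e) * (A + B - 1 - c) <= e * (1 + c) * (1 + e - A - s).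
Proof.
  assert (Hchord := mid_chord_bound).
  assert (HW : 0 <= W) by (unfold W; apply Rplus_le_le_0_compat; repeat apply Rmult_le_pos; lra).
  assert (HCS : U * A + V * s <= W).
  { apply le_of_sqr_le; [exact HW|].
    pose proof (cauchy_schwarz_unit U V A s ltac:(lra)). pose proof mid_sum_squares. lra. }
  assert (H1 : c * (1 + e) * (A + B - 1 - c) * (1 + b) <= c * (1 + e) * (A - c) * (2 + b + c)).
  { assert (0 <= c * (1 + e)) by nra.
    replace (c * (1 + e) * (A + B - 1 - c) * (1 + b))
      with (c * (1 + e) * ((1 + b) * (A - c) + ((1 + b) * B - (1 + b)))) by ring.
    replace (c * (1 + e) * (A - c) * (2 + b + c))
      with (c * (1 + e) * ((1 + b) * (A - c) + (1 + c) * (A - c))) by ring.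
    apply Rmult_le_compat_l; lra. }
  assert (E : W - (U * A + V * s)
              = e * (1 + c) * (1 + e - A - s) * (1 + b) - c * (1 + e) * (A - c) * (2 + b + c))
    by (unfold U, V, W; ring).
  apply (Rmult_le_reg_r (1 + b)); lra.
Qed.

End MidInequality.

(** * Shape of [l] on [[2k, 2k+2]] *)

Section StaircaseSegment.
Variables (k : nat) (b : R).
Hypothesis Hb : 1 <= b.

Lemma l_lt_of_p_rising t1 t2 : 2 * INR k + 1 <= t1 -> t1 < t2 -> t2 <= 2 * INR k + 2 ->
  l t2 b < l t1 b.
Proof.
  intros H1 H12 H2. assert (Hk := pos_INR k).
  destruct (sigma_hat_spec t2 b) as [Hs _]; [lra|lra|].
  rewrite (l_eq_l_at t2 b) by lra. set (s := sigma_hat t2 b) in *.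
  assert (HA := sqrt_one_minus_sqr_lt_1 s Hs).
  rewrite (l_at_p_rising k t2 t1 b s) by lra.
  assert (l_at t1 b s <= l t1 b) by (apply l_at_le_l; lra).
  assert (0 < (t2 - t1) * (1 - sqrt (1 - s ^ 2))) by (apply Rmult_lt_0_compat; lra).
  lra.
Qed.

Lemma l_gt_q_rising_left t : 2 * INR k < t <= 2 * INR k + 1 ->
  l (2 * INR k) b + (t - 2 * INR k) * (sqrt (b ^ 2 - (sigma_hat (2 * INR k) b) ^ 2) - 1) < l t b.
Proof.
  intros Ht. assert (Hk := pos_INR k).
  destruct (sigma_hat_spec (2 * INR k) b) as [Hs Hc]; [lra|lra|].
  set (s := sigma_hat (2 * INR k) b) in *.
  assert (HB : 0 < sqrt (b ^ 2 - s ^ 2)) by (apply sqrt_lt_R0; nra).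
  assert (Hct : crit (p t) (q t) b s <> 1).
  { destruct (pq_even k) as [P0 Q0]. destruct (pq_q_rising k t) as [P1 Q1]; [lra|].
    assert (0 < (t - 2 * INR k) * s / sqrt (b ^ 2 - s ^ 2))
      by (apply Rdiv_lt_0_compat; [apply Rmult_lt_0_compat|]; lra).
    assert (crit (p t) (q t) b s = crit (p (2 * INR k)) (q (2 * INR k)) b s
                                   + (t - 2 * INR k) * s / sqrt (b ^ 2 - s ^ 2)).
    { unfold crit. rewrite P0, Q0, P1, Q1. field. split; [lra|].
      apply Rgt_not_eq, sqrt_lt_R0. nra. }
    lra. }
  assert (H := l_at_lt_l t b ltac:(lra) Hb s ltac:(lra) Hct).
  rewrite (l_at_q_rising k t (2 * INR k) b s) in H by lra.
  rewrite (l_eq_l_at (2 * INR k) b) by lra. fold s. exact H.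
Qed.

Lemma l_ge_q_rising_right t : 2 * INR k <= t <= 2 * INR k + 1 ->
  l (2 * INR k + 1) b + (2 * INR k + 1 - t) * (1 - sqrt (b ^ 2 - (sigma_hat (2 * INR k + 1) b) ^ 2))
  <= l t b.
Proof.
  intros Ht. assert (Hk := pos_INR k).
  destruct (sigma_hat_spec (2 * INR k + 1) b) as [Hs _]; [lra|lra|].
  assert (H := l_at_le_l t b ltac:(lra) Hb (sigma_hat (2 * INR k + 1) b) ltac:(lra)).
  rewrite (l_at_q_rising k t (2 * INR k + 1) b) in H by lra.
  rewrite (l_eq_l_at (2 * INR k + 1) b) by lra. lra.
Qed.

(* At [s = sqrt (b^2 - 1)] the [q]-term has unit width, so [l_at] is constant in [t]. *)
Lemma l_ge_q_rising_const t : b ^ 2 <= 2 -> 2 * INR k <= t <= 2 * INR k + 1 ->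
  (INR k + 1) * sqrt (2 - b ^ 2) + sqrt (b ^ 2 - 1) - INR k - sqrt 2 <= l t b.
Proof.
  intros Hb2 Ht. destruct (pq_q_rising k t Ht) as [P Q].
  set (e := sqrt (b ^ 2 - 1)).
  assert (He2 : e * e = b ^ 2 - 1) by (apply sqrt_sqrt; nra).
  assert (He : 0 <= e <= 1) by (split; [apply sqrt_pos | apply sqrt_le_of_le_sqr; lra]).
  assert (H := l_at_le_l t b ltac:(pose proof (pos_INR k); lra) Hb e He).
  unfold l_at, phi in H. rewrite P, Q in H.
  replace (1 - e ^ 2) with (2 - b ^ 2) in H by nra.
  replace (b ^ 2 - e ^ 2) with 1 in H by nra. rewrite sqrt_1 in H. lra.
Qed.


Lemma crit_at_unit_width P Q e c : 0 < c -> c * c = 2 - b ^ 2 -> e * e = b ^ 2 - 1 -> 0 <= e ->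
  crit P Q b e = P * e / c + Q * e.
Proof.
  intros Hc Hc2 He2 He. unfold crit.
  replace (1 - e ^ 2) with (c * c) by nra. replace (b ^ 2 - e ^ 2) with 1 by nra.
  rewrite sqrt_square, sqrt_1 by lra. field. lra.
Qed.

(* The delicate case: [sigma_hat] crosses [e = sqrt (b^2 - 1)] inside [2k, 2k+1]. *)
Lemma sigma_hat_crossing : 1 < b ->
  sqrt (b ^ 2 - (sigma_hat (2 * INR k) b) ^ 2) < 1 ->
  1 < sqrt (b ^ 2 - (sigma_hat (2 * INR k + 1) b) ^ 2) ->
  b ^ 2 < 2 /\ sigma_hat (2 * INR k + 2) b < sqrt (b ^ 2 - 1) /\
  (INR k + 1) * sqrt (b ^ 2 - 1) * (1 + sqrt (2 - b ^ 2))
  < sqrt (2 - b ^ 2) * (1 + sqrt (b ^ 2 - 1)).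
Proof.
  intros Hb1 HB0 HB1. assert (Hk := pos_INR k).
  destruct (sigma_hat_spec (2 * INR k) b) as [Hs0 Hc0]; [lra|lra|].
  destruct (sigma_hat_spec (2 * INR k + 1) b) as [Hs1 Hc1]; [lra|lra|].
  destruct (sigma_hat_spec (2 * INR k + 2) b) as [Hs Hc]; [lra|lra|].
  destruct (pq_even k) as [P0 Q0]. destruct (pq_even_succ k) as [P2 Q2].
  destruct (pq_q_rising k (2 * INR k + 1)) as [P1 Q1]; [lra|].
  replace (2 * INR k + 1 - INR k) with (INR k + 1) in Q1 by ring.
  rewrite P0, Q0 in Hc0. rewrite P1, Q1 in Hc1. rewrite P2, Q2 in Hc.
  set (s0 := sigma_hat (2 * INR k) b) in *. set (s1 := sigma_hat (2 * INR k + 1) b) in *.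
  set (s := sigma_hat (2 * INR k + 2) b) in *.
  rewrite <- sqrt_1 in HB0, HB1. apply sqrt_lt_0_alt in HB0, HB1.
  set (e := sqrt (b ^ 2 - 1)). set (c := sqrt (2 - b ^ 2)).
  assert (He : 0 < e) by (apply sqrt_lt_R0; nra).
  assert (Hc' : 0 < c) by (apply sqrt_lt_R0; nra).
  assert (He2 : e * e = b ^ 2 - 1) by (apply sqrt_sqrt; nra).
  assert (Hc2 : c * c = 2 - b ^ 2) by (apply sqrt_sqrt; nra).
  assert (Fe := fun P Q => crit_at_unit_width P Q e c Hc' Hc2 He2 ltac:(lra)).
  assert (C0 : (INR k + 1) * e / c + INR k * e < 1).
  { assert (H : crit (INR k + 1) (INR k) b e < crit (INR k + 1) (INR k) b s0)
      by (apply crit_lt; nra).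
    rewrite Hc0, Fe in H. exact H. }
  assert (C1 : 1 < (INR k + 1) * e / c + (INR k + 1) * e).
  { assert (H : crit (INR k + 1) (INR k + 1) b s1 < crit (INR k + 1) (INR k + 1) b e)
      by (apply crit_lt; nra).
    rewrite Hc1, Fe in H. exact H. }
  split; [nra|]. split.
  - apply (crit_lt_inv (INR k + 2) (INR k + 1) b); try nra.
    rewrite Hc, Fe. assert (0 < e / c) by (apply Rdiv_lt_0_compat; lra).
    replace ((INR k + 2) * e / c) with ((INR k + 1) * e / c + e / c) by (field; lra). lra.
  - assert (Hx : ((INR k + 1) * e / c + INR k * e) * c < 1 * c) by (apply Rmult_lt_compat_r; lra).
    replace (((INR k + 1) * e / c + INR k * e) * c) with ((INR k + 1) * e + INR k * e * c) in Hx
      by (field; lra).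
    nra.
Qed.

Lemma l_even_succ_lt_q_rising_const : 1 < b ->
  sqrt (b ^ 2 - (sigma_hat (2 * INR k) b) ^ 2) < 1 ->
  1 < sqrt (b ^ 2 - (sigma_hat (2 * INR k + 1) b) ^ 2) ->
  l (2 * INR k + 2) b < (INR k + 1) * sqrt (2 - b ^ 2) + sqrt (b ^ 2 - 1) - INR k - sqrt 2.
Proof.
  intros Hb1 HB0 HB1. assert (Hk := pos_INR k).
  destruct (sigma_hat_crossing Hb1 HB0 HB1) as [Hb2 [Hse Hcross]].
  destruct (sigma_hat_spec (2 * INR k + 2) b) as [Hs _]; [lra|lra|].
  rewrite (l_eq_l_at (2 * INR k + 2) b) by lra.
  destruct (pq_even_succ k) as [P2 Q2]. unfold l_at, phi. rewrite P2, Q2.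
  set (s := sigma_hat (2 * INR k + 2) b) in *.
  set (e := sqrt (b ^ 2 - 1)) in *. set (c := sqrt (2 - b ^ 2)) in *.
  set (A := sqrt (1 - s ^ 2)). set (B := sqrt (b ^ 2 - s ^ 2)).
  assert (He : 0 < e) by (apply sqrt_lt_R0; nra).
  assert (Hc : 0 < c) by (apply sqrt_lt_R0; nra).
  assert (He2 : e * e = b ^ 2 - 1) by (apply sqrt_sqrt; nra).
  assert (Hc2 : c * c = 2 - b ^ 2) by (apply sqrt_sqrt; nra).
  assert (HA2 : A * A = 1 - s * s) by (unfold A; rewrite sqrt_sqrt by nra; ring).
  assert (HB2 : B * B = b * b - s * s) by (unfold B; rewrite sqrt_sqrt by nra; ring).
  assert (HAc : c < A) by (apply lt_of_sqr_lt; [apply sqrt_pos|nra]).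
  assert (HB1' : 1 < B) by (apply lt_of_sqr_lt; [apply sqrt_pos|nra]).
  assert (Hmid := mid_ineq s e A B c b ltac:(lra) Hse ltac:(nra) ltac:(lra) HA2 HB2 Hc
                    ltac:(nra) ltac:(lra) ltac:(nra)).
  assert (Key : (INR k + 1) * (A + B - 1 - c) < 1 + e - A - s).
  { apply (Rmult_lt_reg_r (e * (1 + c))); [nra|].
    assert ((INR k + 1) * e * (1 + c) * (A + B - 1 - c) < c * (1 + e) * (A + B - 1 - c))
      by (apply Rmult_lt_compat_r; lra).
    nra. }
  lra.
Qed.

Lemma l_interior_gt_endpoint t : 1 < b -> 2 * INR k < t < 2 * INR k + 2 ->
  l (2 * INR k) b < l t b \/ l (2 * INR k + 2) b < l t b.
Proof.
  intros Hb1 Ht. assert (Hk := pos_INR k).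
  destruct (Rlt_or_le (2 * INR k + 1) t) as [h|h].
  { right. apply l_lt_of_p_rising; lra. }
  set (B0 := sqrt (b ^ 2 - (sigma_hat (2 * INR k) b) ^ 2)).
  set (B1 := sqrt (b ^ 2 - (sigma_hat (2 * INR k + 1) b) ^ 2)).
  destruct (Rle_or_lt 1 B0) as [HB0|HB0].
  { left. pose proof (l_gt_q_rising_left t ltac:(lra)). fold B0 in H.
    assert (0 <= (t - 2 * INR k) * (B0 - 1)) by (apply Rmult_le_pos; lra). lra. }
  right. destruct (Rle_or_lt B1 1) as [HB1|HB1].
  - pose proof (l_ge_q_rising_right t ltac:(lra)). fold B1 in H.
    assert (l (2 * INR k + 2) b < l (2 * INR k + 1) b) by (apply l_lt_of_p_rising; lra).
    assert (0 <= (2 * INR k + 1 - t) * (1 - B1)) by (apply Rmult_le_pos; lra). lra.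
  - assert (b ^ 2 <= 2).
    { destruct (sigma_hat_spec (2 * INR k) b) as [Hs0 _]; [lra|lra|].
      unfold B0 in HB0. rewrite <- sqrt_1 in HB0. apply sqrt_lt_0_alt in HB0. nra. }
    pose proof (l_even_succ_lt_q_rising_const Hb1 HB0 HB1).
    pose proof (l_ge_q_rising_const t H ltac:(lra)). lra.
Qed.

End StaircaseSegment.

(** * The increments [delta] in [k] *)

Lemma l_even_succ (j : nat) b : l (2 * INR (S j)) b = l (2 * INR j) b + delta j b.
Proof. unfold delta. rewrite INR_double_succ. ring. Qed.

Section DeltaInK.
Variables (j : nat) (b : R).
Hypothesis Hb : 1 <= b.

Lemma delta_gt_rise : rise b (sigma_hat (2 * INR j) b) < delta j b.
Proof.
  assert (Hj := pos_INR j). unfold delta.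
  destruct (sigma_hat_spec (2 * INR j) b) as [Hs Hc]; [lra|lra|].
  rewrite (l_eq_l_at (2 * INR j) b) by lra.
  set (s := sigma_hat (2 * INR j) b) in *.
  assert (HA : 0 < sqrt (1 - s ^ 2)) by (apply sqrt_lt_R0; nra).
  assert (HB : 0 < sqrt (b ^ 2 - s ^ 2)) by (apply sqrt_lt_R0; nra).
  assert (Hc' : crit (p (2 * INR j + 2)) (q (2 * INR j + 2)) b s <> 1).
  { destruct (pq_even j) as [P0 Q0]. destruct (pq_even_succ j) as [P2 Q2].
    rewrite P0, Q0 in Hc. assert (0 < s / sqrt (1 - s ^ 2) + s / sqrt (b ^ 2 - s ^ 2))
      by (apply Rplus_lt_0_compat; apply Rdiv_lt_0_compat; lra).
    assert (crit (INR j + 2) (INR j + 1) b s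
            = crit (INR j + 1) (INR j) b s + (s / sqrt (1 - s ^ 2) + s / sqrt (b ^ 2 - s ^ 2)))
      by (unfold crit; field; lra).
    rewrite P2, Q2. lra. }
  assert (H := l_at_lt_l (2 * INR j + 2) b ltac:(lra) Hb s ltac:(lra) Hc').
  rewrite l_at_even_succ in H. lra.
Qed.

Lemma delta_le_rise : delta j b <= rise b (sigma_hat (2 * INR j + 2) b).
Proof.
  assert (Hj := pos_INR j). unfold delta.
  destruct (sigma_hat_spec (2 * INR j + 2) b) as [Hs _]; [lra|lra|].
  rewrite (l_eq_l_at (2 * INR j + 2) b) by lra.
  assert (H := l_at_le_l (2 * INR j) b ltac:(lra) Hb (sigma_hat (2 * INR j + 2) b) ltac:(lra)).
  rewrite l_at_even_succ. lra.
Qed.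

End DeltaInK.

Lemma delta_lt_succ (j : nat) b : 1 <= b -> delta j b < delta (S j) b.
Proof.
  intros Hb. pose proof (delta_le_rise j b Hb). pose proof (delta_gt_rise (S j) b Hb).
  rewrite INR_double_succ in H0. lra.
Qed.

Lemma delta_lt_of_lt b (j m : nat) : 1 <= b -> (j < m)%nat -> delta j b < delta m b.
Proof.
  intros Hb Hjm. induction Hjm as [|m Hm IH].
  - now apply delta_lt_succ.
  - pose proof (delta_lt_succ m b Hb). lra.
Qed.

Lemma delta_eventually_pos b : 1 < b -> exists J : nat, 0 < delta J b.
Proof.
  intros Hb. destruct (INR_archimed 1 (2 / (b - 1))) as [J HJ]; [lra|]. rewrite Rmult_1_r in HJ.
  exists J. assert (HJ0 := pos_INR J).
  apply (Rle_lt_trans _ (rise b (sigma_hat (2 * INR J) b))); [|apply delta_gt_rise; lra].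
  destruct (sigma_hat_spec (2 * INR J) b) as [Hs Hc]; [lra|lra|].
  destruct (pq_even J) as [P0 Q0]. rewrite P0, Q0 in Hc.
  assert (Hs1 := mul_le_sqrt_of_crit_eq_1 (INR J + 1) (INR J) b _ HJ0 ltac:(lra) Hs Hc).
  set (s := sigma_hat (2 * INR J) b) in *. unfold rise.
  set (A := sqrt (1 - s ^ 2)) in *. set (B := sqrt (b ^ 2 - s ^ 2)).
  assert (HA2 : A * A = 1 - s ^ 2) by (apply sqrt_sqrt; nra).
  assert (HB2 : B * B = b ^ 2 - s ^ 2) by (apply sqrt_sqrt; nra).
  assert (0 <= A) by apply sqrt_pos. assert (0 <= B) by apply sqrt_pos.
  assert (A <= 1) by (apply sqrt_le_of_le_sqr; nra).
  assert (HA1 : 1 - s ^ 2 <= A) by nra.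
  assert (HB1 : b - s ^ 2 <= B) by (apply le_of_sqr_le; nra).
  assert (H2 : 2 < (INR J + 1) * (b - 1)).
  { assert (Hx : 2 / (b - 1) * (b - 1) < INR J * (b - 1)) by (apply Rmult_lt_compat_r; lra).
    replace (2 / (b - 1) * (b - 1)) with 2 in Hx by (field; lra). nra. }
  assert (Hs1J : (INR J + 1) * s <= 1) by nra.
  nra.
Qed.

Lemma seq_lt_of_steps_pos (u : nat -> R) a m :
  (forall j, (a <= j)%nat -> (j < m)%nat -> u j < u (S j)) -> (a < m)%nat -> u a < u m.
Proof.
  intros H Ham. induction Ham as [|m Ham IH].
  - apply H; lia.
  - assert (u m < u (S m)) by (apply H; lia).
    assert (u a < u m) by (apply IH; intros; apply H; lia). lra.
Qed.

Lemma seq_le_of_steps_nonpos (u : nat -> R) m a :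
  (forall j, (m <= j)%nat -> (j < a)%nat -> u (S j) <= u j) -> (m <= a)%nat -> u a <= u m.
Proof.
  intros H Hma. induction Hma as [|a Hma IH].
  - lra.
  - assert (u (S a) <= u a) by (apply H; lia).
    assert (u a <= u m) by (apply IH; intros; apply H; lia). lra.
Qed.

Lemma seq_lt_of_steps_neg (u : nat -> R) m a :
  (forall j, (m <= j)%nat -> (j < a)%nat -> u (S j) < u j) -> (m < a)%nat -> u a < u m.
Proof.
  intros H Hma. induction Hma as [|a Hma IH].
  - apply H; lia.
  - assert (u (S a) < u a) by (apply H; lia).
    assert (u a < u m) by (apply IH; intros; apply H; lia). lra.
Qed.

Lemma k_c_spec b : 1 < b -> 0 < delta (k_c b) b /\ forall j, (j < k_c b)%nat -> delta j b <= 0.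
Proof.
  intros Hb.
  assert (H : delta (k_c b) b > 0 /\ forall j : nat, (j < k_c b)%nat -> ~ (delta j b > 0)).
  { unfold k_c. apply (epsilon_spec (inhabits 0%nat)
      (fun k => delta k b > 0 /\ forall j : nat, (j < k)%nat -> ~ (delta j b > 0))).
    destruct (dec_inh_nat_subset_has_unique_least_element (fun k => delta k b > 0)
                (fun n => classic _) (delta_eventually_pos b Hb)) as [n [[Hn Hleast] _]].
    exists n. split; [exact Hn|]. intros j Hj Pj. specialize (Hleast j Pj). lia. }
  destruct H as [H1 H2]. split; [lra|]. intros j Hj. specialize (H2 j Hj). lra.
Qed.

Lemma delta_pos_from_k_c b j : 1 < b -> (k_c b <= j)%nat -> 0 < delta j b.
Proof.
  intros Hb Hj. destruct (k_c_spec b Hb) as [K _].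
  destruct (le_lt_eq_dec _ _ Hj) as [h|<-]; [|exact K].
  pose proof (delta_lt_of_lt b (k_c b) j ltac:(lra) h). lra.
Qed.

Section MinimumOverEvens.
Variable b : R.
Hypothesis Hb : 1 < b.

Lemma l_even_ge_k_c j : l (2 * INR (k_c b)) b <= l (2 * INR j) b.
Proof.
  destruct (k_c_spec b Hb) as [_ Hneg].
  destruct (le_lt_dec j (k_c b)) as [h|h].
  - apply (seq_le_of_steps_nonpos (fun i => l (2 * INR i) b)); [|exact h].
    intros i _ Hi. rewrite l_even_succ. specialize (Hneg i Hi). lra.
  - left. apply (seq_lt_of_steps_pos (fun i => l (2 * INR i) b)); [|exact h].
    intros i Hi _. rewrite l_even_succ. pose proof (delta_pos_from_k_c b i Hb Hi). lra.
Qed.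

Lemma l_even_gt_k_c j : (k_c b < j)%nat -> l (2 * INR (k_c b)) b < l (2 * INR j) b.
Proof.
  apply (seq_lt_of_steps_pos (fun i => l (2 * INR i) b)).
  intros i Hi _. rewrite l_even_succ. pose proof (delta_pos_from_k_c b i Hb Hi). lra.
Qed.

End MinimumOverEvens.

Section EvenLowerBound.
Variables b m : R.
Hypotheses (Hb : 1 < b) (Hm : forall j : nat, m <= l (2 * INR j) b).

Lemma l_interior_gt_even_bound (k : nat) t : 2 * INR k < t < 2 * INR k + 2 -> m < l t b.
Proof.
  intros Ht. destruct (l_interior_gt_endpoint k b ltac:(lra) t Hb Ht) as [h|h].
  - pose proof (Hm k). lra.
  - pose proof (Hm (S k)). rewrite INR_double_succ in H. lra.
Qed.

Lemma l_ge_even_bound t : 0 <= t -> m <= l t b.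
Proof.
  intros Ht. destruct (even_segment_exists t Ht) as [k Hk].
  destruct (Req_dec t (2 * INR k)) as [->|E]; [apply Hm|].
  left. apply (l_interior_gt_even_bound k). lra.
Qed.

Lemma l_gt_even_bound t : 0 <= t -> (forall j : nat, t = 2 * INR j -> m < l t b) -> m < l t b.
Proof.
  intros Ht Heven. destruct (even_segment_exists t Ht) as [k Hk].
  destruct (Req_dec t (2 * INR k)) as [E|E]; [now apply (Heven k)|].
  apply (l_interior_gt_even_bound k). lra.
Qed.

End EvenLowerBound.

(** * Dependence on [beta] *)

Lemma l_at_beta_diff t b1 b2 s :
  l_at t b2 s - l_at t b1 s = q t * (sqrt (b2 ^ 2 - s ^ 2) - sqrt (b1 ^ 2 - s ^ 2)).
Proof. unfold l_at, phi. ring. Qed.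

Lemma sigma_hat_sqr_le_half t b : 0 <= t -> 1 <= b -> (sigma_hat t b) ^ 2 <= 1 / 2.
Proof.
  intros Ht Hb. destruct (sigma_hat_spec t b Ht Hb) as [Hs Hc].
  destruct (pq_bounds t Ht) as [HP HQ].
  assert (H := mul_le_sqrt_of_crit_eq_1 _ _ _ _ HQ Hb Hs Hc).
  set (s := sigma_hat t b) in *.
  assert (HA : s <= sqrt (1 - s ^ 2)) by nra.
  assert (sqrt (1 - s ^ 2) * sqrt (1 - s ^ 2) = 1 - s ^ 2) by (apply sqrt_sqrt; nra).
  assert (s * s <= sqrt (1 - s ^ 2) * sqrt (1 - s ^ 2)) by (apply Rmult_le_compat; lra).
  nra.
Qed.

Lemma sqrt_sub_sqr_increment_le b1 b2 s : 1 <= b1 <= b2 -> s ^ 2 <= 1 / 2 ->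
  sqrt (b2 ^ 2 - s ^ 2) - sqrt (b1 ^ 2 - s ^ 2) <= b2 ^ 2 - b1 ^ 2.
Proof.
  intros Hb Hs.
  set (X1 := sqrt (b1 ^ 2 - s ^ 2)). set (X2 := sqrt (b2 ^ 2 - s ^ 2)).
  assert (HX1 : 1 / 2 <= X1) by (apply le_sqrt_of_sqr_le; nra).
  assert (HX12 : X1 <= X2) by (apply sqrt_le_1_alt; nra).
  assert (E : (X2 - X1) * (X2 + X1) = b2 ^ 2 - b1 ^ 2).
  { replace ((X2 - X1) * (X2 + X1)) with (X2 * X2 - X1 * X1) by ring.
    unfold X1, X2. rewrite !sqrt_sqrt by nra. ring. }
  nra.
Qed.

Lemma l_beta_bounds t b1 b2 : 0 <= t -> 1 <= b1 <= b2 ->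
  l t b1 <= l t b2 <= l t b1 + q t * (b2 ^ 2 - b1 ^ 2).
Proof.
  intros Ht Hb. destruct (pq_bounds t Ht) as [_ HQ].
  destruct (sigma_hat_spec t b1 Ht ltac:(lra)) as [Hs1 _].
  destruct (sigma_hat_spec t b2 Ht ltac:(lra)) as [Hs2 _].
  pose proof (l_eq_l_at t b1 Ht ltac:(lra)). pose proof (l_eq_l_at t b2 Ht ltac:(lra)).
  set (s1 := sigma_hat t b1) in *. set (s2 := sigma_hat t b2) in *.
  pose proof (l_at_le_l t b2 Ht ltac:(lra) s1 ltac:(lra)).
  pose proof (l_at_le_l t b1 Ht ltac:(lra) s2 ltac:(lra)).
  pose proof (l_at_beta_diff t b1 b2 s1). pose proof (l_at_beta_diff t b1 b2 s2).
  assert (0 <= q t * (sqrt (b2 ^ 2 - s1 ^ 2) - sqrt (b1 ^ 2 - s1 ^ 2))).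
  { apply Rmult_le_pos; [lra|].
    assert (sqrt (b1 ^ 2 - s1 ^ 2) <= sqrt (b2 ^ 2 - s1 ^ 2)) by (apply sqrt_le_1_alt; nra). lra. }
  assert (q t * (sqrt (b2 ^ 2 - s2 ^ 2) - sqrt (b1 ^ 2 - s2 ^ 2)) <= q t * (b2 ^ 2 - b1 ^ 2)).
  { apply Rmult_le_compat_l; [lra|]. apply sqrt_sub_sqr_increment_le; [lra|].
    apply sigma_hat_sqr_le_half; lra. }
  lra.
Qed.

Lemma sqrt_sub_sqr_increment_ge b1 b2 s : 0 <= b1 <= b2 -> s ^ 2 <= b1 ^ 2 ->
  b2 - b1 <= sqrt (b2 ^ 2 - s ^ 2) - sqrt (b1 ^ 2 - s ^ 2).
Proof.
  intros Hb Hs.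
  set (X1 := sqrt (b1 ^ 2 - s ^ 2)). set (X2 := sqrt (b2 ^ 2 - s ^ 2)).
  assert (HX1 : X1 * X1 = b1 ^ 2 - s ^ 2) by (apply sqrt_sqrt; nra).
  assert (HX2 : X2 * X2 = b2 ^ 2 - s ^ 2) by (apply sqrt_sqrt; nra).
  assert (0 <= X1) by apply sqrt_pos. assert (0 <= X2) by apply sqrt_pos.
  assert (X1 <= b1) by (apply le_of_sqr_le; nra). assert (X2 <= b2) by (apply le_of_sqr_le; nra).
  destruct (Rle_or_lt (b2 - b1) (X2 - X1)) as [h|h]; [exact h|].
  assert (X1 <= X2) by (apply sqrt_le_1_alt; nra).
  assert (0 < X2) by nra. nra.
Qed.

(* [K b_i < (K + 1) sqrt (b_i^2 - s^2)] because [(K + 1)^2 s^2 <= 1 < (2K + 1) b_i^2]. *)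
Lemma sqrt_sub_sqr_increment_lt K b1 b2 s :
  0 <= K -> 1 <= b1 < b2 -> 0 <= s < 1 -> (K + 1) * s <= 1 ->
  K * (sqrt (b2 ^ 2 - s ^ 2) - sqrt (b1 ^ 2 - s ^ 2)) < (K + 1) * (b2 - b1).
Proof.
  intros HK Hb Hs HKs.
  destruct (Req_dec K 0) as [->|HK0]; [lra|].
  set (Y1 := sqrt (b1 ^ 2 - s ^ 2)). set (Y2 := sqrt (b2 ^ 2 - s ^ 2)).
  assert (HY1 : Y1 * Y1 = b1 ^ 2 - s ^ 2) by (apply sqrt_sqrt; nra).
  assert (HY2 : Y2 * Y2 = b2 ^ 2 - s ^ 2) by (apply sqrt_sqrt; nra).
  assert (0 < Y1) by (apply sqrt_lt_R0; nra). assert (0 < Y2) by (apply sqrt_lt_R0; nra).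
  assert (Hss : (K + 1) * s * ((K + 1) * s) <= 1).
  { assert (0 <= (K + 1) * s) by (apply Rmult_le_pos; lra). nra. }
  assert (G : forall b Y, 1 <= b -> 0 <= Y -> Y * Y = b ^ 2 - s ^ 2 -> K * b < (K + 1) * Y).
  { intros b Y Hb' HY HYY. apply lt_of_sqr_lt; [nra|].
    replace ((K + 1) * Y * ((K + 1) * Y)) with ((K + 1) * (K + 1) * (b ^ 2 - s ^ 2))
      by (rewrite <- HYY; ring).
    assert (1 <= b * b) by nra. assert (0 < K * (b * b)) by nra. nra. }
  assert (H1 := G b1 Y1 ltac:(lra) ltac:(lra) HY1).
  assert (H2 := G b2 Y2 ltac:(lra) ltac:(lra) HY2).
  assert (E : (Y2 - Y1) * (Y2 + Y1) = (b2 - b1) * (b2 + b1)) by nra.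
  apply (Rmult_lt_reg_r (Y1 + Y2)); [lra|].
  replace (K * (Y2 - Y1) * (Y1 + Y2)) with (K * ((b2 - b1) * (b2 + b1))) by nra.
  nra.
Qed.

Lemma delta_lt_of_beta_lt (k : nat) b1 b2 : 1 <= b1 -> b1 < b2 -> delta k b1 < delta k b2.
Proof.
  intros Hb1 H12. assert (Hk := pos_INR k). unfold delta.
  destruct (pq_even k) as [P0 Q0]. destruct (pq_even_succ k) as [_ Q2].
  destruct (sigma_hat_spec (2 * INR k + 2) b1) as [Hs _]; [lra|lra|].
  destruct (sigma_hat_spec (2 * INR k) b2) as [Hs' Hc']; [lra|lra|].
  set (s := sigma_hat (2 * INR k + 2) b1) in *. set (s' := sigma_hat (2 * INR k) b2) in *.
  assert (L2 := l_at_le_l (2 * INR k + 2) b2 ltac:(lra) ltac:(lra) s ltac:(lra)).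
  assert (L0 := l_at_le_l (2 * INR k) b1 ltac:(lra) ltac:(lra) s' ltac:(lra)).
  assert (D2 := l_at_beta_diff (2 * INR k + 2) b1 b2 s).
  assert (D0 := l_at_beta_diff (2 * INR k) b1 b2 s').
  rewrite (l_eq_l_at (2 * INR k + 2) b1) by lra. rewrite (l_eq_l_at (2 * INR k) b2) by lra.
  fold s s'. rewrite Q2 in D2. rewrite Q0 in D0.
  rewrite P0, Q0 in Hc'.
  assert (Hs'1 : (INR k + 1) * s' <= 1).
  { pose proof (mul_le_sqrt_of_crit_eq_1 (INR k + 1) (INR k) b2 s' Hk ltac:(lra) Hs' Hc').
    assert (sqrt (1 - s' ^ 2) <= 1) by (apply sqrt_le_of_le_sqr; nra). lra. }
  assert (X := sqrt_sub_sqr_increment_ge b1 b2 s ltac:(lra) ltac:(nra)).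
  assert (Y := sqrt_sub_sqr_increment_lt (INR k) b1 b2 s' Hk ltac:(lra) ltac:(lra) Hs'1).
  assert ((INR k + 1) * (b2 - b1) <= (INR k + 1) * (sqrt (b2 ^ 2 - s ^ 2) - sqrt (b1 ^ 2 - s ^ 2)))
    by (apply Rmult_le_compat_l; lra).
  lra.
Qed.

Lemma delta_beta_lipschitz (k : nat) b1 b2 : 1 <= b1 <= b2 ->
  0 <= delta k b2 - delta k b1 <= (INR k + 1) * (b2 ^ 2 - b1 ^ 2).
Proof.
  intros Hb. assert (Hk := pos_INR k).
  destruct (pq_even_succ k) as [_ Q2]. unfold delta.
  destruct (l_beta_bounds (2 * INR k + 2) b1 b2 ltac:(lra) Hb) as [_ H2].
  destruct (l_beta_bounds (2 * INR k) b1 b2 ltac:(lra) Hb) as [H0 _].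
  rewrite Q2 in H2. split.
  - destruct (Req_dec b1 b2) as [->|Hne]; [lra|].
    pose proof (delta_lt_of_beta_lt k b1 b2 ltac:(lra) ltac:(lra)). unfold delta in H. lra.
  - lra.
Qed.

Lemma continuity_pt_of_local_lipschitz (f : R -> R) x M : 0 < M ->
  (forall y, Rabs (y - x) < 1 -> Rabs (f y - f x) <= M * Rabs (y - x)) -> continuity_pt f x.
Proof.
  intros HM H eps Heps. exists (Rmin 1 (eps / M)). split.
  - apply Rmin_pos; [lra | apply Rdiv_lt_0_compat; lra].
  - intros y [_ Hy]. simpl in *. unfold R_dist in *.
    assert (Hy1 : Rabs (y - x) < 1) by (pose proof (Rmin_l 1 (eps / M)); lra).
    assert (Hy2 : Rabs (y - x) < eps / M) by (pose proof (Rmin_r 1 (eps / M)); lra).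
    specialize (H y Hy1).
    assert (M * Rabs (y - x) < M * (eps / M)) by (apply Rmult_lt_compat_l; lra).
    replace (M * (eps / M)) with eps in H0 by (field; lra). lra.
Qed.

(* [delta k] is only meaningful on [1, +oo); clamping makes it a total continuous function. *)
Definition delta_clamped (k : nat) (x : R) : R := delta k (Rmax 1 x).

Lemma delta_clamped_continuous (k : nat) : continuity (delta_clamped k).
Proof.
  intros x. assert (Hk := pos_INR k). assert (Hx := Rabs_pos x).
  apply (continuity_pt_of_local_lipschitz _ x ((INR k + 1) * (2 * Rabs x + 4))); [nra|].
  intros y Hy. unfold delta_clamped.
  assert (Hm : Rabs (Rmax 1 y - Rmax 1 x) <= Rabs (y - x))
    by (unfold Rmax; destruct (Rle_dec 1 y), (Rle_dec 1 x); split_Rabs; lra).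
  assert (Ha : 1 <= Rmax 1 x <= 1 + Rabs x)
    by (unfold Rmax; destruct (Rle_dec 1 x); split_Rabs; lra).
  assert (Hc : 1 <= Rmax 1 y <= 2 + Rabs x)
    by (unfold Rmax; destruct (Rle_dec 1 y); split_Rabs; lra).
  set (a := Rmax 1 x) in *. set (c := Rmax 1 y) in *.
  assert (Hsq : Rabs (c ^ 2 - a ^ 2) <= Rabs (y - x) * (2 * Rabs x + 4)).
  { replace (c ^ 2 - a ^ 2) with ((c - a) * (c + a)) by ring. rewrite Rabs_mult.
    rewrite (Rabs_pos_eq (c + a)) by lra. apply Rmult_le_compat; try lra; apply Rabs_pos. }
  assert (Hd : Rabs (delta k c - delta k a) <= (INR k + 1) * Rabs (c ^ 2 - a ^ 2)).
  { destruct (Rle_or_lt a c) as [h|h].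
    - pose proof (delta_beta_lipschitz k a c ltac:(lra)).
      rewrite Rabs_pos_eq by lra. rewrite (Rabs_pos_eq (c ^ 2 - a ^ 2)) by nra. lra.
    - pose proof (delta_beta_lipschitz k c a ltac:(lra)).
      rewrite Rabs_left1 by lra. rewrite (Rabs_left1 (c ^ 2 - a ^ 2)) by nra. lra. }
  assert ((INR k + 1) * Rabs (c ^ 2 - a ^ 2) <= (INR k + 1) * (Rabs (y - x) * (2 * Rabs x + 4)))
    by (apply Rmult_le_compat_l; lra).
  lra.
Qed.

(* For [b = 1] both square roots coincide and the maximum of [phi] is explicit. *)
Lemma l_beta_one t : 0 <= t -> l t 1 = sqrt ((t + 1) ^ 2 + 1) - t - sqrt 2.
Proof.
  intros Ht. destruct (sigma_hat_spec t 1 Ht ltac:(lra)) as [Hs Hc].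
  rewrite (l_eq_l_at t 1) by lra. unfold crit in Hc. unfold l_at, phi.
  rewrite pow1 in *.
  set (s := sigma_hat t 1) in *. set (A := sqrt (1 - s ^ 2)) in *.
  assert (HA : 0 < A) by (apply sqrt_lt_R0; nra).
  assert (HA2 : A * A = 1 - s ^ 2) by (apply sqrt_sqrt; nra).
  assert (Hpq : p t + q t = t + 1) by (unfold p; ring).
  assert (H1 : (t + 1) * s = A).
  { rewrite <- Hpq. apply (Rmult_eq_reg_r (/ A)); [|apply Rinv_neq_0_compat; lra].
    rewrite Rinv_r by lra. rewrite <- Hc. field. lra. }
  assert (Hphi : p t * A + q t * A + s = s * ((t + 1) ^ 2 + 1))
    by (rewrite <- H1, <- Hpq; ring).
  rewrite Hphi. do 2 f_equal.
  assert (Hs2 : s ^ 2 * ((t + 1) ^ 2 + 1) = 1) by nra.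
  rewrite <- (sqrt_square (s * ((t + 1) ^ 2 + 1))) by nra. f_equal.
  transitivity (((t + 1) ^ 2 + 1) * (s ^ 2 * ((t + 1) ^ 2 + 1))); [ring | rewrite Hs2; ring].
Qed.

Lemma delta_beta_one_neg (k : nat) : delta k 1 < 0.
Proof.
  assert (Hk := pos_INR k). unfold delta. rewrite !l_beta_one by lra.
  set (a := 2 * INR k + 1).
  replace (2 * INR k + 2 + 1) with (a + 2) by (unfold a; ring). fold a.
  assert (Ha : 0 < a) by (unfold a; lra).
  replace (a ^ 2) with (a * a) by ring.
  assert (H1 : a < sqrt (a * a + 1)) by (apply lt_sqrt_of_sqr_lt; lra).
  assert (H2 : sqrt ((a + 2) ^ 2 + 1) < sqrt (a * a + 1) + 2).
  { apply sqrt_lt_of_lt_sqr; [lra|].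
    replace ((sqrt (a * a + 1) + 2) * (sqrt (a * a + 1) + 2))
      with (sqrt (a * a + 1) * sqrt (a * a + 1) + 4 * sqrt (a * a + 1) + 4) by ring.
    rewrite sqrt_sqrt by nra. nra. }
  lra.
Qed.

Lemma l_zero b : 1 <= b -> l 0 b = 0 /\ (sigma_hat 0 b) ^ 2 = 1 / 2.
Proof.
  intros Hb. destruct (sigma_hat_spec 0 b ltac:(lra) Hb) as [Hs Hc].
  rewrite (l_eq_l_at 0 b) by lra.
  destruct (pq_even 0) as [P0 Q0]. rewrite Rmult_0_r in P0, Q0. simpl INR in P0, Q0.
  unfold crit in Hc. unfold l_at, phi. rewrite P0, Q0 in *.
  set (s := sigma_hat 0 b) in *. set (A := sqrt (1 - s ^ 2)) in *.
  assert (HA : 0 < A) by (apply sqrt_lt_R0; nra).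
  assert (HB : 0 < sqrt (b ^ 2 - s ^ 2)) by (apply sqrt_lt_R0; nra).
  assert (HA2 : A * A = 1 - s ^ 2) by (apply sqrt_sqrt; nra).
  assert (H1 : s = A).
  { apply (Rmult_eq_reg_r (/ A)); [|apply Rinv_neq_0_compat; lra].
    rewrite Rinv_r by lra. rewrite <- Hc. field. lra. }
  assert (Hs2 : s ^ 2 = 1 / 2) by nra.
  split; [|exact Hs2].
  assert (E2 : sqrt 2 = 2 * s) by (rewrite <- (sqrt_square (2 * s)) by lra; f_equal; nra).
  rewrite E2, <- H1. ring.
Qed.

Lemma sqrt2_bounds : 1.414 < sqrt 2 < 1.4143.
Proof. split; [apply lt_sqrt_of_sqr_lt | apply sqrt_lt_of_lt_sqr]; lra. Qed.

Lemma delta_sqrt2_pos (k : nat) : 0 < delta k (sqrt 2).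
Proof.
  assert (Hs2 := sqrt2_bounds).
  assert (H0 : 0 < delta 0 (sqrt 2)).
  { unfold delta. rewrite Rmult_0_r, Rplus_0_l.
    rewrite (proj1 (l_zero (sqrt 2) ltac:(lra))).
    assert (H := l_at_le_l 2 (sqrt 2) ltac:(lra) ltac:(lra) (2 / 5) ltac:(lra)).
    destruct (pq_even_succ 0) as [P2 Q2].
    rewrite Rmult_0_r, Rplus_0_l in P2, Q2. simpl INR in P2, Q2.
    unfold l_at, phi in H. rewrite P2, Q2, pow2_sqrt in H by lra.
    assert (0.9 <= sqrt (1 - (2 / 5) ^ 2)) by (apply le_sqrt_of_sqr_le; lra).
    assert (1.35 <= sqrt (2 - (2 / 5) ^ 2)) by (apply le_sqrt_of_sqr_le; lra).
    lra. }
  destruct k as [|k]; [exact H0|].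
  pose proof (delta_lt_of_lt (sqrt 2) 0 (S k) ltac:(lra) ltac:(lia)). lra.
Qed.

Lemma beta_c_spec (k : nat) : 1 < beta_c k < sqrt 2 /\ delta k (beta_c k) = 0.
Proof.
  assert (Hs2 := sqrt2_bounds). pose proof (delta_beta_one_neg k). pose proof (delta_sqrt2_pos k).
  unfold beta_c. apply (epsilon_spec (inhabits 1) (fun b => 1 < b < sqrt 2 /\ delta k b = 0)).
  destruct (IVT (delta_clamped k) 1 (sqrt 2) (delta_clamped_continuous k) ltac:(lra))
    as [z [Hz Hgz]]; unfold delta_clamped in *; [rewrite Rmax_left; lra | rewrite Rmax_right; lra |].
  rewrite Rmax_right in Hgz by lra.
  exists z. assert (z <> 1) by (intros ->; lra). assert (z <> sqrt 2) by (intros ->; lra). lra.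
Qed.

Lemma delta_sign_beta_c (k : nat) b : 1 <= b ->
  (beta_c k < b -> 0 < delta k b) /\ (b < beta_c k -> delta k b < 0) /\
  (b <= beta_c k -> delta k b <= 0).
Proof.
  intros Hb. destruct (beta_c_spec k) as [B1 B2].
  split; [|split].
  - intros H. pose proof (delta_lt_of_beta_lt k (beta_c k) b ltac:(lra) H). lra.
  - intros H. pose proof (delta_lt_of_beta_lt k b (beta_c k) Hb H). lra.
  - intros H. destruct (Req_dec b (beta_c k)) as [->|E]; [lra|].
    pose proof (delta_lt_of_beta_lt k b (beta_c k) Hb ltac:(lra)). lra.
Qed.

Lemma beta_c_succ_lt (k : nat) : beta_c (S k) < beta_c k.
Proof.
  destruct (beta_c_spec k) as [B1 B2]. destruct (beta_c_spec (S k)) as [C1 _].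
  pose proof (delta_lt_succ k (beta_c k) ltac:(lra)).
  destruct (Rlt_or_le (beta_c (S k)) (beta_c k)) as [h|h]; [exact h|].
  pose proof (proj2 (proj2 (delta_sign_beta_c (S k) (beta_c k) ltac:(lra))) h). lra.
Qed.

Lemma beta_c_antitone (j k : nat) : (j <= k)%nat -> beta_c k <= beta_c j.
Proof.
  intros H. induction H as [|k H IH]; [lra|]. pose proof (beta_c_succ_lt k). lra.
Qed.

(** * The regimes *)

Lemma k_c_eq_0 b : beta_c 0 < b -> k_c b = 0%nat.
Proof.
  intros H. destruct (beta_c_spec 0) as [B1 _].
  destruct (k_c_spec b ltac:(lra)) as [_ Hneg].
  destruct (k_c b) as [|K]; [reflexivity|].
  pose proof (Hneg 0%nat ltac:(lia)). pose proof (proj1 (delta_sign_beta_c 0 b ltac:(lra)) H). lra.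
Qed.

Lemma k_c_eq_succ (k : nat) b : beta_c (S k) < b <= beta_c k -> k_c b = S k.
Proof.
  intros [H1 H2]. destruct (beta_c_spec (S k)) as [B1 _].
  destruct (k_c_spec b ltac:(lra)) as [Hpos Hneg].
  destruct (lt_eq_lt_dec (k_c b) (S k)) as [[h|h]|h]; [|exact h|].
  - pose proof (beta_c_antitone (k_c b) k ltac:(lia)).
    pose proof (proj2 (proj2 (delta_sign_beta_c (k_c b) b ltac:(lra))) ltac:(lra)). lra.
  - pose proof (Hneg (S k) h). pose proof (proj1 (delta_sign_beta_c (S k) b ltac:(lra)) H1). lra.
Qed.

Lemma l_gt_k_c b t : 1 < b -> 2 * INR (k_c b) < t -> l (2 * INR (k_c b)) b < l t b.
Proof.
  intros Hb Ht. assert (HK := pos_INR (k_c b)).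
  apply (l_gt_even_bound b _ Hb (l_even_ge_k_c b Hb) t ltac:(lra)).
  intros j ->. apply l_even_gt_k_c; [exact Hb|].
  destruct (le_lt_dec j (k_c b)) as [h|h]; [apply le_INR in h; lra | exact h].
Qed.

Lemma l_min_between (k : nat) b : beta_c (S k) < b < beta_c k ->
  forall t, 0 <= t -> t <> 2 * INR k + 2 -> l (2 * INR k + 2) b < l t b.
Proof.
  intros Hbk t Ht Hne. destruct (beta_c_spec (S k)) as [[B1 _] _].
  assert (Hb : 1 < b) by lra.
  assert (HK : k_c b = S k) by (apply k_c_eq_succ; lra).
  rewrite <- INR_double_succ, <- HK.
  apply (l_gt_even_bound b _ Hb (l_even_ge_k_c b Hb) t Ht).
  intros j ->. rewrite HK.
  destruct (lt_eq_lt_dec j (S k)) as [[h|h]|h].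
  - apply (seq_lt_of_steps_neg (fun i => l (2 * INR i) b)); [|exact h].
    intros i _ Hi. rewrite l_even_succ.
    pose proof (beta_c_antitone i k ltac:(lia)).
    pose proof (proj1 (proj2 (delta_sign_beta_c i b ltac:(lra))) ltac:(lra)). lra.
  - subst j. rewrite INR_double_succ in Hne. lra.
  - rewrite <- HK. apply l_even_gt_k_c; [exact Hb | lia].
Qed.

Lemma l_min_at_beta_c (k : nat) :
  l (2 * INR k) (beta_c k) = l (2 * INR k + 2) (beta_c k) /\
  forall t, 0 <= t -> t <> 2 * INR k -> t <> 2 * INR k + 2 ->
    l (2 * INR k) (beta_c k) < l t (beta_c k).
Proof.
  destruct (beta_c_spec k) as [[B1 _] B3]. set (b := beta_c k) in *.
  assert (Heq : l (2 * INR k) b = l (2 * INR k + 2) b) by (unfold delta in B3; lra).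
  assert (Hlow : forall j, (j < k)%nat -> l (2 * INR k) b < l (2 * INR j) b).
  { intros j Hj. apply (seq_lt_of_steps_neg (fun i => l (2 * INR i) b)); [|exact Hj].
    intros i _ Hi. rewrite l_even_succ. pose proof (delta_lt_of_lt b i k ltac:(lra) Hi). lra. }
  assert (Hhigh : forall j, (S k < j)%nat -> l (2 * INR k) b < l (2 * INR j) b).
  { intros j Hj. rewrite Heq, <- INR_double_succ.
    apply (seq_lt_of_steps_pos (fun i => l (2 * INR i) b)); [|exact Hj].
    intros i Hi _. rewrite l_even_succ. pose proof (delta_lt_of_lt b k i ltac:(lra) Hi). lra. }
  assert (Hall : forall j, l (2 * INR k) b <= l (2 * INR j) b).
  { intros j. destruct (lt_eq_lt_dec j k) as [[h|<-]|h]; [left; auto | lra |].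
    destruct (Nat.eq_dec j (S k)) as [->|E]; [rewrite INR_double_succ; lra|].
    left. apply Hhigh. lia. }
  split; [exact Heq|]. intros t Ht H1 H2.
  apply (l_gt_even_bound b _ ltac:(lra) Hall t Ht).
  intros j ->. destruct (lt_eq_lt_dec j k) as [[h|<-]|h]; [auto | lra |].
  destruct (Nat.eq_dec j (S k)) as [->|E]; [rewrite INR_double_succ in H2; lra|].
  apply Hhigh. lia.
Qed.

Lemma l_pos_near_zero b : sqrt (3 / 2) <= b -> forall t, 0 < t <= 1 -> l t b > 0.
Proof.
  intros Hb t Ht.
  assert (H32 : 1 < sqrt (3 / 2)) by (apply lt_sqrt_of_sqr_lt; lra).
  assert (Hb2 : 3 / 2 <= b * b).
  { assert (sqrt (3 / 2) * sqrt (3 / 2) = 3 / 2) by (apply sqrt_sqrt; lra).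
    assert (0 <= sqrt (3 / 2)) by apply sqrt_pos. nra. }
  destruct (l_zero b ltac:(lra)) as [L0 S0].
  pose proof (l_gt_q_rising_left 0 b ltac:(lra) t) as V. rewrite Rmult_0_r in V.
  specialize (V ltac:(lra)). rewrite L0, S0 in V.
  assert (1 <= sqrt (b ^ 2 - 1 / 2)) by (apply le_sqrt_of_sqr_le; nra).
  assert (0 <= (t - 0) * (sqrt (b ^ 2 - 1 / 2) - 1)) by (apply Rmult_le_pos; lra).
  lra.
Qed.

Theorem corollary3p15 :
  (forall beta : R, 1 < beta ->
     exists m : R,
       (exists s, 0 <= s /\ l s beta = m) /\ (forall s, 0 <= s -> m <= l s beta) /\
       (exists k : nat, l (2 * INR k) beta = m) /\ (forall k : nat, m <= l (2 * INR k) beta) /\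
       (forall (k : nat) (t : R), 2 * INR k < t < 2 * INR k + 2 -> m < l t beta)) /\
  ((forall beta : R, beta > beta_c 0 -> k_c beta = 0%nat) /\
   (forall (k : nat) (beta : R), beta_c (S k) < beta <= beta_c k -> k_c beta = S k)) /\
  (forall beta : R, beta > beta_c 0 ->
     l 0 beta = 0 /\ forall t : R, t > 0 -> l 0 beta < l t beta) /\
  (forall (k : nat) (beta : R), beta_c (S k) < beta < beta_c k ->
     forall t : R, 0 <= t -> t <> 2 * INR k + 2 -> l (2 * INR k + 2) beta < l t beta) /\
  (forall k : nat,
     l (2 * INR k) (beta_c k) = l (2 * INR k + 2) (beta_c k) /\
     forall t : R, 0 <= t -> t <> 2 * INR k -> t <> 2 * INR k + 2 ->
       l (2 * INR k) (beta_c k) < l t (beta_c k)) /\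
  (forall beta : R, sqrt (3 / 2) <= beta -> forall t : R, 0 < t <= 1 -> l t beta > 0) /\
  (forall beta : R, 1 < beta ->
     forall t : R, t > 2 * INR (k_c beta) -> l (2 * INR (k_c beta)) beta < l t beta).
Proof.
  split; [|split; [split|split; [|split; [|split; [|split]]]]].
  - intros b Hb. pose proof (l_even_ge_k_c b Hb) as Hmin.
    exists (l (2 * INR (k_c b)) b). repeat split.
    + exists (2 * INR (k_c b)). split; [pose proof (pos_INR (k_c b)); lra | reflexivity].
    + exact (l_ge_even_bound b _ Hb Hmin).
    + now exists (k_c b).
    + exact Hmin.
    + exact (l_interior_gt_even_bound b _ Hb Hmin).
  - exact k_c_eq_0.
  - exact k_c_eq_succ.
  - intros b Hb. destruct (beta_c_spec 0) as [[B1 _] _].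
    split; [exact (proj1 (l_zero b ltac:(lra)))|].
    intros t Ht. pose proof (l_gt_k_c b t ltac:(lra)) as H.
    rewrite (k_c_eq_0 b Hb), Rmult_0_r in H. auto.
  - exact l_min_between.
  - exact l_min_at_beta_c.
  - exact l_pos_near_zero.
  - intros b Hb t Ht. now apply l_gt_k_c.
Qed.
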